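(* Let $m = p + 12k$ with $k \geq 0$ an integer and $p \in \{11,13,17,19\}$. Suppose $(X, Y, P_0, Q_0)$ is a type-1 basic set of dipaths of $G_{2m}$. For $j \in \{1,\dots,k-1\}$ let $P_j = \rho^{12j}(P_0)$ and $Q_j = \rho^{12j}(Q_0)$. Then $C^0 = X P_0 P_1 \cdots P_{k-1}$ and $C^1 = Y Q_0 Q_1 \cdots Q_{k-1}$ are type-1 directed $m$-cycles of $G_{2m}$, and $C^0 \cup C^1$ is a $\vec{C}_m$-factor of $G_{2m}$.
   Context: Let $m$ be odd. $G_{2m} = \vec{X}(m,\{1,3\}) \wr K^*_2$ is the digraph with vertex set $\{x_a, y_a : a \in \mathbb{Z}_m\}$ whose arcs are: $(u_a, v_b)$ for all $u,v \in \{x,y\}$ and $a,b$ with $b-a \equiv 1$ or $3 \pmod m$, together with $(x_a,y_a)$ and $(y_a,x_a)$ for all $a$. An arc from a vertex with subscript $a$ to one with subscript $b$ has difference equal to the representative of $b-a$ in $\{0,1,\dots,m-1\}$. A type-$k$ cycle is a directed $m$-cycle whose arc differences sum (as integers) to $km$. The map $\rho$ sends $x_i \mapsto x_{i+1}$, $y_i \mapsto y_{i+1}$ (subscripts mod $m$), applied vertexwise to dipaths. For a dipath $P$: $s(P)$ is its first vertex, $t(P)$ its last vertex, $\mathrm{len}(P)$ its number of arcs (a dipath of length $0$ is a single vertex); $PQ$ denotes concatenation when $t(P)=s(Q)$. With $m = p+12k$, set $V_0 = \{x_j, y_j : 0 \le j \le p-1\}$ and, for $1 \le i \le k$, $V_i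 = \{x_j, y_j : p+12(i-1) \le j \le p+12i-1\}$. A 4-tuple $(X,Y,R,S)$ of dipaths (or, when $k=0$, closed dipaths) of $G_{2m}$ is a type-1 basic set of dipaths if: (C1) $R$ and $S$ are vertex-disjoint; if $k\ge1$ then $X$ and $Y$ are vertex-disjoint dipaths, while if $k=0$ they are vertex-disjoint type-1 directed cycles; (C2) $s(X)=\rho^{-p}(t(X))$ and $s(Y)=\rho^{-p}(t(Y))$; (C3) $\mathrm{len}(X)=\mathrm{len}(Y)=p$; $\mathrm{len}(R)=\mathrm{len}(S)=12$ if $k\ge1$ and $\mathrm{len}(R)=\mathrm{len}(S)=0$ if $k=0$; (C4) each of $X,Y$ has its source and internal vertices in $V_0$ and its terminal vertex equal to $x_t$ or $y_t$ for some $t\in\{p,p+1,p+2\}$; (C5) $t(X)=s(R)$ and $t(Y)=s(S)$; (C6) if $k\ge1$ and $P\in\{R,S\}$ has $s(P)=x_t$ (resp. $y_t$), then $t(P)=x_{t+12}$ (resp. $y_{t+12}$), and all internal vertices of $P$ lie in $V_1$. A $\vec{C}_m$-factor is a spanning subdigraph that is a disjoint union of directed $m$-cycles. *)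

From mathcomp Require Import all_boot.
Set Implicit Arguments. Unset Strict Implicit. Unset Printing Implicit Defensive.

(* Vertices of G_{2m}: (false, a) = x_a, (true, a) = y_a, with 0 <= a < m. *)
Definition vert := (bool * nat)%type.
Definition vdef : vert := (false, 0).

Definition valid (m : nat) (v : vert) : bool := v.2 < m.

Definition vdiff (m : nat) (u v : vert) : nat := (v.2 + m - u.2) %% m.

(* arcs of G_{2m} = X(m,{1,3}) wr K_2^* *)
Definition arc (m : nat) (u v : vert) : bool :=
  [&& valid m u, valid m v &
   [|| vdiff m u v == 1 %% m, vdiff m u v == 3 %% m
     | (u.2 == v.2) && (u.1 != v.1)]].

Definition rho (m j : nat) (v : vert) : vert := (v.1, (v.2 + j) %% m).
Definition rhoinv (m j : nat) (v : vert) : vert := (v.1, (v.2 + (m - j %% m)) %% m).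
Definition rhoP (m j : nat) (P : seq vert) : seq vert := map (rho m j) P.

Definition src (P : seq vert) : vert := head vdef P.
Definition tgt (P : seq vert) : vert := last vdef P.
Definition len (P : seq vert) : nat := (size P).-1.
Definition internal (P : seq vert) : seq vert := take (size P - 2) (behead P).

Definition is_dipath (m : nat) (P : seq vert) : bool :=
  [&& 0 < size P, all (valid m) P, path (arc m) (src P) (behead P) & uniq P].

Definition is_closed_dipath (m : nat) (C : seq vert) : bool :=
  [&& 1 < size C, all (valid m) C, path (arc m) (src C) (behead C),
      src C == tgt C & uniq (behead C)].

Definition is_mcycle (m : nat) (C : seq vert) : bool :=
  is_closed_dipath m C && (len C == m).

Definition diffsum (m : nat) (C : seq vert) : nat :=
  sumn (map (fun e => vdiff m e.1 e.2) (zip C (behead C))).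

Definition is_type_cycle (m t : nat) (C : seq vert) : bool :=
  is_mcycle m C && (diffsum m C == t * m).

Definition vdisjoint (P Q : seq vert) : bool := all (fun v => v \notin Q) P.

Definition catP (P Q : seq vert) : seq vert := P ++ behead Q.

Definition is_Cm_factor (m : nat) (cs : seq (seq vert)) : Prop :=
  (forall C, C \in cs -> is_mcycle m C) /\
  (forall i j, i < size cs -> j < size cs -> i != j ->
      vdisjoint (nth [::] cs i) (nth [::] cs j)) /\
  (forall v : vert, valid m v -> exists2 C, C \in cs & v \in C).

Definition inV (p i : nat) (v : vert) : bool :=
  if i == 0 then v.2 < p else (p + 12 * (i - 1) <= v.2) && (v.2 <= p + 12 * i - 1).

Definition basic_set1 (m p k : nat) (X Y R S : seq vert) : Prop :=
  is_dipath m R /\ is_dipath m S /\ vdisjoint R S /\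
  (if 1 <= k then is_dipath m X /\ is_dipath m Y /\ vdisjoint X Y
   else is_type_cycle m 1 X /\ is_type_cycle m 1 Y /\ vdisjoint X Y) /\
  src X = rhoinv m p (tgt X) /\ src Y = rhoinv m p (tgt Y) /\
  len X = p /\ len Y = p /\
  (if 1 <= k then len R = 12 /\ len S = 12 else len R = 0 /\ len S = 0) /\
  (forall P, P \in [:: X; Y] ->
     all (inV p 0) (belast (src P) (behead P)) /\
     (tgt P).2 \in [:: p %% m; p.+1 %% m; p.+2 %% m]) /\
  tgt X = src R /\ tgt Y = src S /\
  (1 <= k -> forall P, P \in [:: R; S] ->
     tgt P = ((src P).1, ((src P).2 + 12) %% m) /\ all (inV p 1) (internal P)).

Definition chain (m k : nat) (X P0 : seq vert) : seq vert :=
  foldl catP X [seq rhoP m (12 * j) P0 | j <- iota 0 k].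

(* A vertex is a pair (b, a) with subscript a < m, and rho m j adds j to subscripts mod m.
   1. rho preserves arcs and arc differences, so it maps walks to walks and preserves
      diffsum; diffsum is additive under concatenation; and along a walk none of whose arcs
      starts at a subscript >= m - 3, no arc wraps around, so diffsum telescopes to the
      difference of the end subscripts.
   2. For any X, P0 with t(X) = s(P0) and t(P0) = rho^12 (s(P0)), the chain
      X P0 rho^12(P0) ... rho^{12(n-1)}(P0) is a walk of diffsum  diffsum X + n diffsum P0,
      and it is  front X ++ blocks ++ [rho^{12n} (s(P0))],  where front P drops the last
      vertex of P and the j-th block is rho^{12j} (front P0).
   3. For a type-1 basic set with k >= 1 (only p >= 3 is needed): X lies below subscript p
      so diffsum X = p, P0 rotated down by p lies below subscript 15 so diffsum P0 = 12,
      and the chain has diffsum p + 12k = m; front X lies below p while block j lies in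
      [p + 12j, p + 12j + 11] without wrapping, so the chain is an m-cycle through s(X).
      Its vertices lie in X or fold back, modulo 12, onto vertices of P0.
   4. Two vertex-disjoint m-cycles cover the 2m vertices of G_{2m} (pigeonhole); the two
      chains are disjoint by 3 and the disjointness of X, Y and of P0, Q0.  For k = 0 the
      chains are X and Y themselves. *)
From mathcomp Require Import all_boot zify.
Set Implicit Arguments. Unset Strict Implicit. Unset Printing Implicit Defensive.

Lemma rho_valid m j v : 0 < m -> valid m (rho m j v).
Proof. by move=> m_gt0; rewrite /valid ltn_mod. Qed.

Lemma rhoD m a b v : rho m a (rho m b v) = rho m (b + a) v.
Proof. by rewrite /rho /= modnDml addnA. Qed.

Lemma rho_small m j v : v.2 + j < m -> rho m j v = (v.1, v.2 + j).
Proof. by move=> small; rewrite /rho modn_small. Qed.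

Lemma rho0 m v : valid m v -> rho m 0 v = v.
Proof. by case: v => b a hv; rewrite rho_small ?addn0. Qed.

Lemma rhoinvE m j v : j < m -> rhoinv m j v = rho m (m - j) v.
Proof. by move=> lt_jm; rewrite /rhoinv (modn_small lt_jm). Qed.

Lemma vdiff_rho m j u v : valid m u -> valid m v ->
  vdiff m (rho m j u) (rho m j v) = vdiff m u v.
Proof.
move=> hu hv; rewrite /valid in hu hv; rewrite /vdiff /=.
apply/eqP; rewrite -(eqn_modDr (u.2 + j)).
have -> : v.2 + m - u.2 + (u.2 + j) = (v.2 + j) + m by lia.
rewrite modnDr -modnDmr subnK; last by have := ltn_mod (u.2 + j) m; lia.
by rewrite modnDr modn_mod.
Qed.

Lemma arc_rho m j u v : arc m u v -> arc m (rho m j u) (rho m j v).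
Proof.
case/and3P=> hu hv huv; have m_gt0 : 0 < m by move: hu; rewrite /valid; lia.
rewrite /arc !rho_valid //= vdiff_rho //.
suff -> : ((u.2 + j) %% m == (v.2 + j) %% m) = (u.2 == v.2) by [].
by rewrite -/(_ == _ %[mod m]) eqn_modDr !modn_small.
Qed.

(* Arc differences are 0, 1 or 3, so an arc leaving a subscript below m - 3 does not wrap
   around: its difference is the plain difference of subscripts. *)
Lemma arc_step m u v : arc m u v -> u.2 + 3 < m -> u.2 + vdiff m u v = v.2.
Proof.
case/and3P=> hu hv huv low; rewrite /valid in hu hv.
have [le_uv | lt_vu] := leqP u.2 v.2.
  rewrite /vdiff (_ : v.2 + m - u.2 = v.2 - u.2 + m); last by lia.
  by rewrite modnDr modn_small; lia.
have diffE : vdiff m u v = v.2 + m - u.2 by rewrite /vdiff modn_small; lia.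
by move: huv; rewrite diffE (@modn_small 1) ?(@modn_small 3); lia.
Qed.

Definition walk m (P : seq vert) : bool :=
  [&& 0 < size P, all (valid m) P & path (arc m) (src P) (behead P)].

Definition front (P : seq vert) : seq vert := belast (src P) (behead P).

Lemma dipath_walk m P : is_dipath m P -> walk m P.
Proof. by case/and4P=> *; apply/and3P. Qed.

Lemma src_rhoP m j P : 0 < size P -> src (rhoP m j P) = rho m j (src P).
Proof. by case: P. Qed.

Lemma tgt_rhoP m j P : 0 < size P -> tgt (rhoP m j P) = rho m j (tgt P).
Proof. by case: P => // x s _; rewrite /tgt /= last_map. Qed.

Lemma path_rho m j x s :
  path (arc m) x s -> path (arc m) (rho m j x) (rhoP m j s).
Proof. by rewrite /rhoP path_map; apply: sub_path => u v; apply: arc_rho. Qed.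

Lemma walk_rhoP m j P : walk m P -> walk m (rhoP m j P).
Proof.
case: P => [|x s] /and3P[//= _ /andP[hx _] walk_s].
have m_gt0 : 0 < m by move: hx; rewrite /valid; lia.
apply/and3P; split=> //=; last exact: path_rho.
by rewrite rho_valid //=; apply/allP => _ /mapP[u _ ->]; apply: rho_valid.
Qed.

Lemma walk_catP m P Q : walk m P -> walk m Q -> tgt P = src Q -> walk m (catP P Q).
Proof.
case: P Q => [|x s] [|y t] //.
move=> /and3P[_ /= /andP[val_x val_s] path_s] /and3P[_ /= /andP[_ val_t] path_t].
rewrite /tgt /src /= => last_s; apply/and3P; split=> //=.
  by rewrite val_x all_cat val_s val_t.
by rewrite cat_path path_s last_s.
Qed.

Lemma front_rcons P : 0 < size P -> P = rcons (front P) (tgt P).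
Proof. by case: P => // x s _; rewrite /front /tgt /= -lastI. Qed.

Lemma front_internal P : 1 < size P -> front P = src P :: internal P.
Proof.
case: P => [|x [|y s]] // _; rewrite /front /internal /= !subSS subn0.
by congr (_ :: _); elim: s y => [|z s IH] y //=; rewrite IH.
Qed.

Lemma mem_front P v : v \in front P -> v \in P.
Proof. by case: P => //= x s /mem_belast. Qed.

Lemma size_front P : size (front P) = len P.
Proof. by rewrite size_belast size_behead. Qed.

Lemma uniq_front P : uniq P -> uniq (front P).
Proof. by case: P => // x s; rewrite {1}lastI rcons_uniq => /andP[_ uniq_s]. Qed.

Lemma front_rhoP m j P : front (rhoP m j P) = map (rho m j) (front P).
Proof. by case: P => //= x s; apply: belast_map. Qed.

Lemma rhoP_front m j P : 0 < size P ->
  rhoP m j P = rcons (map (rho m j) (front P)) (rho m j (tgt P)).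
Proof. by move=> P_ne; rewrite {1}(front_rcons P_ne) /rhoP map_rcons. Qed.

Fixpoint dsum m (x : vert) (s : seq vert) : nat :=
  if s is y :: s' then vdiff m x y + dsum m y s' else 0.

Lemma diffsum_cons m x s : diffsum m (x :: s) = dsum m x s.
Proof. by elim: s x => [|y s IH] x //=; rewrite /diffsum /= -IH. Qed.

Lemma dsum_cat m x s1 s2 : dsum m x (s1 ++ s2) = dsum m x s1 + dsum m (last x s1) s2.
Proof. by elim: s1 x => [|y s IH] x //=; rewrite IH addnA. Qed.

Lemma diffsum_catP m P Q : 0 < size P -> 0 < size Q -> tgt P = src Q ->
  diffsum m (catP P Q) = diffsum m P + diffsum m Q.
Proof.
case: P Q => [|x s] [|y t] // _ _.
by rewrite /tgt /src /= => last_s; rewrite !diffsum_cons dsum_cat last_s.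
Qed.

Lemma diffsum_rhoP m j P : all (valid m) P -> diffsum m (rhoP m j P) = diffsum m P.
Proof.
case: P => [|x s] //=; rewrite !diffsum_cons.
elim: s x => [|y s IH] x //= /and3P[val_x val_y val_s].
by rewrite vdiff_rho // IH //= val_y.
Qed.

(* A walk all of whose arcs start below subscript m - 3 never wraps around, so its diffsum
   is the difference between the subscripts of its ends. *)
Lemma diffsum_low m P : walk m P -> all (fun u => u.2 + 3 < m) (front P) ->
  (src P).2 + diffsum m P = (tgt P).2.
Proof.
case: P => [|x s] // /and3P[_ _ path_s]; move: path_s.
rewrite /src /tgt /= diffsum_cons; elim: s x => [|y s IH] x /=; first by rewrite addn0.
by move=> /andP[arc_xy path_s] /andP[low_x low_s]; rewrite addnA arc_step // IH.
Qed.

Lemma iota0S n : iota 0 n.+1 = rcons (iota 0 n) n.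
Proof. by rewrite -cats1 -addn1 iotaD. Qed.

Lemma chainS m n X P0 : chain m n.+1 X P0 = catP (chain m n X P0) (rhoP m (12 * n) P0).
Proof. by rewrite /chain iota0S map_rcons foldl_rcons. Qed.

Definition blocks m n P0 : seq vert :=
  [seq rho m (12 * j) u | j <- iota 0 n, u <- front P0].

Lemma blocksS m n P0 : blocks m n.+1 P0 = blocks m n P0 ++ map (rho m (12 * n)) (front P0).
Proof. by rewrite /blocks iota0S allpairs_rcons. Qed.

(* Consecutive pieces of the chain overlap in exactly one vertex, since
   t(rho^{12j} P0) = rho^{12(j+1)} (s(P0)) = s(rho^{12(j+1)} P0). *)
Lemma chain_shape m n X P0 : 0 < size X -> walk m P0 ->
  tgt X = src P0 -> tgt P0 = rho m 12 (src P0) ->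
  chain m n X P0 = rcons (front X ++ blocks m n P0) (rho m (12 * n) (src P0)).
Proof.
move=> X_ne /and3P[P0_ne val_P0 _] X_P0 tgt_P0.
have src_in : src P0 \in P0 by case: (P0) P0_ne => // x s _; apply: mem_head.
elim: n => [|n IH].
  by rewrite muln0 rho0 ?(allP val_P0) // cats0 -X_P0 -front_rcons.
have head_rhoP : rhoP m (12 * n) P0 = rho m (12 * n) (src P0) :: rhoP m (12 * n) (behead P0).
  by case: (P0) P0_ne.
rewrite chainS IH head_rhoP /catP cat_rcons -head_rhoP rhoP_front // tgt_P0 rhoD -mulnS.
by rewrite blocksS -rcons_cat catA.
Qed.

Section ChainOfRotations.
Variables (m : nat) (X P0 : seq vert).
Hypotheses (walk_X : walk m X) (walk_P0 : walk m P0).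
Hypotheses (X_P0 : tgt X = src P0) (tgt_P0 : tgt P0 = rho m 12 (src P0)).

Let X_ne : 0 < size X. Proof. by case/and3P: walk_X. Qed.
Let P0_ne : 0 < size P0. Proof. by case/and3P: walk_P0. Qed.

Lemma tgt_chain n : tgt (chain m n X P0) = rho m (12 * n) (src P0).
Proof. by rewrite chain_shape // /tgt last_rcons. Qed.

Lemma walk_chain n : walk m (chain m n X P0).
Proof.
elim: n => [|n IH] //; rewrite chainS.
by apply: walk_catP => //; [exact: walk_rhoP | rewrite tgt_chain src_rhoP].
Qed.

Lemma diffsum_chain n : diffsum m (chain m n X P0) = diffsum m X + n * diffsum m P0.
Proof.
elim: n => [|n IH]; first by rewrite addn0.
have chain_ne : 0 < size (chain m n X P0) by case/and3P: (walk_chain n).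
rewrite chainS diffsum_catP ?size_map ?tgt_chain ?src_rhoP //.
rewrite diffsum_rhoP; last by case/and3P: walk_P0.
by rewrite IH mulSnr addnA.
Qed.

End ChainOfRotations.

Lemma terminal_range m p k t : 0 < k -> m = p + 12 * k ->
  t \in [:: p %% m; p.+1 %% m; p.+2 %% m] -> p <= t <= p + 2.
Proof. by move=> k_gt0 m_eq; rewrite !inE !modn_small; lia. Qed.

(* The chain of a type-1 basic set, k >= 1.  fold12 p folds a subscript >= p back into
   [p, p + 11] modulo 12, undoing the rotations rho^{12j} on the blocks. *)

Definition fold12 p (v : vert) : vert := (v.1, p + (v.2 - p) %% 12).

Section TypeOneChain.
Variables (m p k : nat) (X P0 : seq vert).
Hypotheses (p_ge3 : 3 <= p) (k_gt0 : 0 < k) (m_eq : m = p + 12 * k).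
Hypotheses (path_X : is_dipath m X) (path_P0 : is_dipath m P0).
Hypotheses (len_X : len X = p) (len_P0 : len P0 = 12).
Hypotheses (src_X : src X = rhoinv m p (tgt X)) (front_X : all (inV p 0) (front X)).
Hypotheses (tgt_X_range : p <= (tgt X).2 <= p + 2).
Hypotheses (X_P0 : tgt X = src P0) (tgt_P0 : tgt P0 = rho m 12 (src P0)).
Hypotheses (internal_P0 : all (inV p 1) (internal P0)).

Let walk_X : walk m X := dipath_walk path_X.
Let walk_P0 : walk m P0 := dipath_walk path_P0.
Let size_X : size X = p.+1. Proof. by move: len_X; rewrite /len; case: (X) => [|x s] /=; lia. Qed.
Let X_long : 1 < size X. Proof. by rewrite size_X; lia. Qed.
Let size_P0 : size P0 = 13. Proof. by move: len_P0; rewrite /len; case: (P0) => [|x s] /=; lia. Qed.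

(* rho^{12k} = rho^{-p}: it shifts subscripts >= p down by p. *)
Lemma rho_down v : p <= v.2 < m -> rho m (12 * k) v = (v.1, v.2 - p).
Proof.
move=> v_range; rewrite /rho (_ : v.2 + 12 * k = v.2 - p + m); last by lia.
by rewrite modnDr modn_small //; lia.
Qed.

Lemma src_X_rho : src X = rho m (12 * k) (tgt X).
Proof. by rewrite src_X rhoinvE; [congr rho; lia | lia]. Qed.

Lemma front_X_low (u : vert) : u \in front X -> u.2 < p.
Proof. by move/(allP front_X). Qed.

Lemma front_P0_band (u : vert) : u \in front P0 -> p <= u.2 <= p + 11.
Proof.
rewrite front_internal ?size_P0 // inE => /orP[/eqP -> | /(allP internal_P0)].
  by rewrite -X_P0; have := tgt_X_range; lia.
by rewrite /inV /=; lia.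
Qed.

Lemma diffsum_X : diffsum m X = p.
Proof.
have low : all (fun u => u.2 + 3 < m) (front X) by apply/allP => u /front_X_low; lia.
have := diffsum_low walk_X low; rewrite src_X_rho rho_down /=; have := tgt_X_range; lia.
Qed.

(* Measured on rho^{-p} P0, which runs from subscript s - p to s - p + 12 below 15. *)
Lemma diffsum_P0 : diffsum m P0 = 12.
Proof.
have src_range : p <= (src P0).2 <= p + 2 by rewrite -X_P0; exact: tgt_X_range.
have low : all (fun u => u.2 + 3 < m) (front (rhoP m (12 * k) P0)).
  rewrite front_rhoP; apply/allP => _ /mapP[u /front_P0_band u_band ->].
  by rewrite rho_down /=; lia.
have := diffsum_low (walk_rhoP (12 * k) walk_P0) low.
have val_P0 : all (valid m) P0 by case/and3P: walk_P0.
rewrite diffsum_rhoP // src_rhoP ?tgt_rhoP ?size_P0 // tgt_P0 rhoD rho_down; last by lia.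
rewrite /rho /= (_ : (src P0).2 + (12 + 12 * k) = (src P0).2 - p + 12 + m); last by lia.
by rewrite modnDr modn_small; lia.
Qed.

Lemma rho_block j (u : vert) : j < k -> u \in front P0 -> rho m (12 * j) u = (u.1, u.2 + 12 * j).
Proof. by move=> lt_jk /front_P0_band u_band; rewrite rho_small //; lia. Qed.

Lemma mem_blocks (v : vert) : v \in blocks m k P0 -> p <= v.2 /\ fold12 p v \in front P0.
Proof.
case/allpairsP=> [[j [b a]] [/= j_in u_in ->]]; rewrite mem_iota in j_in.
rewrite rho_block //=; have /= a_band := front_P0_band u_in; split; first by lia.
rewrite /fold12 /= (_ : a + 12 * j - p = j * 12 + (a - p)); last by lia.
by rewrite modnMDl modn_small ?subnKC //; lia.
Qed.

(* The blocks occupy the disjoint subscript ranges [p + 12j, p + 12j + 11]. *)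
Lemma uniq_blocks : uniq (blocks m k P0).
Proof.
have [_ _ _ uniq_P0] := and4P path_P0.
apply: allpairs_uniq; rewrite ?iota_uniq ?uniq_front //.
move=> [j u] [j' u'] /allpairsP[[a [b1 b2]] [/= a_in b_in [-> ->]]].
move=> /allpairsP[[a' [b1' b2']] [/= a'_in b'_in [-> ->]]] /=.
move: a_in a'_in; rewrite !mem_iota => a_in a'_in; rewrite !rho_block //; try by lia.
have /= band := front_P0_band b_in; have /= band' := front_P0_band b'_in.
case=> -> sum_eq; have -> : a = a' by lia.
by have -> : b2 = b2' by lia.
Qed.

(* The last piece rho^{12(k-1)} P0 ends at rho^{12k} (t(X)) = s(X). *)
Lemma chain_eq : chain m k X P0 = rcons (front X ++ blocks m k P0) (src X).
Proof. by rewrite chain_shape ?size_X // -X_P0 -src_X_rho. Qed.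

(* The chain visits the m distinct vertices of front X ++ blocks and returns to s(X);
   its diffsum is p + 12k = m. *)
Lemma chain_type_cycle : is_type_cycle m 1 (chain m k X P0).
Proof.
have [_ val_C path_C] := and3P (walk_chain walk_X walk_P0 X_P0 tgt_P0 k).
apply/andP; split; last by apply/eqP; rewrite diffsum_chain // diffsum_X diffsum_P0; lia.
have [_ _ _ uniq_X] := and4P path_X.
have uniq_W : uniq (front X ++ blocks m k P0).
  rewrite cat_uniq uniq_front // uniq_blocks andbT /=.
  by apply/hasPn => v /mem_blocks[v_hi _]; apply/negP => /front_X_low; lia.
have size_W : size (front X ++ blocks m k P0) = m.
  by rewrite size_cat size_allpairs size_iota !size_front len_X len_P0 m_eq mulnC.
have [W' W_eq] : exists W', front X ++ blocks m k P0 = src X :: W'.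
  by rewrite front_internal //; eexists.
rewrite W_eq in uniq_W size_W; rewrite chain_eq W_eq /= in val_C path_C *.
apply/andP; split; last by rewrite /len /= size_rcons -size_W.
apply/and5P; split=> //; first by rewrite /= size_rcons.
  by rewrite /src /tgt /= last_rcons.
by rewrite rcons_uniq -cons_uniq.
Qed.

Lemma chain_mem (v : vert) : v \in chain m k X P0 ->
  (v \in X /\ v.2 < p) \/ (fold12 p v \in P0 /\ p <= v.2).
Proof.
have src_front : src X \in front X by rewrite front_internal // mem_head.
rewrite chain_eq mem_rcons inE mem_cat => /or3P[/eqP -> | v_X | /mem_blocks[v_hi v_P0]].
- by left; split; [apply: mem_front | apply: front_X_low].
- by left; split; [apply: mem_front | apply: front_X_low].
- by right; split=> //; apply: mem_front.
Qed.

End TypeOneChain.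

Lemma vdisjoint_sym P Q : vdisjoint P Q -> vdisjoint Q P.
Proof.
move=> /allP disj; apply/allP => v v_Q; apply/negP => v_P.
by have := disj v v_P; rewrite v_Q.
Qed.

(* Two vertex-disjoint m-cycles have 2m distinct vertices, i.e. all vertices of G_{2m}. *)
Lemma Cm_factor_pair m C0 C1 : is_mcycle m C0 -> is_mcycle m C1 -> vdisjoint C0 C1 ->
  is_Cm_factor m [:: C0; C1].
Proof.
move=> cyc0 cyc1 disj; have disj' := vdisjoint_sym disj.
split; first by move=> C; rewrite !inE => /orP[]/eqP->.
split; first by move=> [|[|i]] [|[|j]].
move: cyc0 cyc1 => /andP[/and5P[_ val0 _ _ uniq0] /eqP len0].
move=> /andP[/and5P[_ val1 _ _ uniq1] /eqP len1].
pose verts := [seq (b, a) | b <- [:: false; true], a <- iota 0 m].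
have in_verts (v : vert) : valid m v -> v \in verts.
  case: v => b a; rewrite /valid /= => a_lt; apply/allpairsP; exists (b, a).
  by split=> //=; [case: b | rewrite mem_iota].
have uniq01 : uniq (behead C0 ++ behead C1).
  rewrite cat_uniq uniq0 uniq1 andbT /=; apply/hasPn => v /mem_behead v_C1.
  by apply/negP => /mem_behead v_C0; move/allP: disj => /(_ v v_C0); rewrite v_C1.
have sub01 : {subset behead C0 ++ behead C1 <= verts}.
  by move=> v; rewrite mem_cat => /orP[] /mem_behead v_C; apply: in_verts;
    [apply: (allP val0) | apply: (allP val1)].
have size01 : size verts <= size (behead C0 ++ behead C1).
  by rewrite size_allpairs size_iota size_cat !size_behead -/(len C0) -/(len C1) len0 len1 /=; lia.
have [_ eq01] := uniq_min_size uniq01 sub01 size01.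
move=> v /in_verts; rewrite -eq01 mem_cat => /orP[] /mem_behead v_C.
  by exists C0; rewrite ?inE ?eqxx.
by exists C1; rewrite ?inE ?eqxx ?orbT.
Qed.

Theorem mainTheorem6 (m p k : nat) (X Y P0 Q0 : seq vert) :
  p \in [:: 11; 13; 17; 19] -> m = p + 12 * k ->
  basic_set1 m p k X Y P0 Q0 ->
  is_type_cycle m 1 (chain m k X P0) /\
  is_type_cycle m 1 (chain m k Y Q0) /\
  is_Cm_factor m [:: chain m k X P0; chain m k Y Q0].
Proof.
move=> p_in m_eq [path_R [path_S [disj_RS [C1 [src_X [src_Y [len_X [len_Y [C3 [C4 [X_R [Y_S C6]]]]]]]]]]]].
have p_ge3 : 3 <= p by move: p_in; rewrite !inE => /or4P[]/eqP->.
have [k0 | k_gt0] := posnP k.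
  move: C1; rewrite k0 => -[cyc_X [cyc_Y disj_XY]].
  by do 2!split=> //; apply: Cm_factor_pair => //; [case/andP: cyc_X | case/andP: cyc_Y].
move: C1 C3; rewrite k_gt0 => -[path_X [path_Y disj_XY]] [len_R len_S].
have [front_X /(terminal_range k_gt0 m_eq) tgt_X] := C4 X (mem_head _ _).
have [front_Y /(terminal_range k_gt0 m_eq) tgt_Y] := C4 Y (mem_last X [:: Y]).
have [tgt_R internal_R] := C6 k_gt0 P0 (mem_head _ _).
have [tgt_S internal_S] := C6 k_gt0 Q0 (mem_last P0 [:: Q0]).
have cyc_X := chain_type_cycle p_ge3 k_gt0 m_eq path_X path_R len_X len_R src_X front_X
  tgt_X X_R tgt_R internal_R.
have cyc_Y := chain_type_cycle p_ge3 k_gt0 m_eq path_Y path_S len_Y len_S src_Y front_Y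
  tgt_Y Y_S tgt_S internal_S.
have mem_X := chain_mem p_ge3 k_gt0 m_eq path_X path_R len_X len_R src_X front_X
  tgt_X X_R tgt_R internal_R.
have mem_Y := chain_mem p_ge3 k_gt0 m_eq path_Y path_S len_Y len_S src_Y front_Y
  tgt_Y Y_S tgt_S internal_S.
do 2!split=> //; apply: Cm_factor_pair; [by case/andP: cyc_X | by case/andP: cyc_Y |].
apply/allP => v v_CX; apply/negP => v_CY.
case: (mem_Y v v_CY) (mem_X v v_CX) => [[v_Y lo'] | [v_Q hi']] [[v_X lo] | [v_P hi]].
- by move/allP: disj_XY => /(_ v v_X); rewrite v_Y.
- by move: hi; rewrite leqNgt lo'.
- by move: hi'; rewrite leqNgt lo.
- by move/allP: disj_RS => /(_ _ v_P); rewrite v_Q.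
Qed.
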